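(* A metrizable topological space $X$ is separable if and only if $C(X)$ has the countable sup property.
   Context: $C(X)$ is the vector lattice of all real-valued continuous functions on $X$ with the pointwise order. A vector lattice has the countable sup property if every nonempty subset possessing a supremum contains a countable subset with the same supremum. *)

From HB Require Import structures.
From mathcomp Require Import all_boot all_order all_algebra.
From mathcomp Require Import all_classical all_reals topology normedtype.
Set Implicit Arguments. Unset Strict Implicit. Unset Printing Implicit Defensive.
Import Order.TTheory GRing.Theory Num.Theory.
Local Open Scope classical_set_scope.
Local Open Scope ring_scope.
Import numFieldNormedType.Exports.

Definition metrizable (R : realType) (X : topologicalType) : Prop :=
  exists d : X -> X -> R,
    [/\ (forall x y, 0 <= d x y),
        (forall x y, d x y = 0 <-> x = y),
        (forall x y, d x y = d y x),
        (forall x y z, d x z <= d x y + d y z) &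
        (forall A : set X, open A <->
           (forall x, A x -> exists2 e : R, 0 < e & forall y, d x y < e -> A y))].

Definition separable_space (X : topologicalType) : Prop :=
  exists D : set X, countable D /\ closure D = setT.

Definition Ccont (R : realType) (X : topologicalType) : set (X -> R) :=
  [set f | continuous (f : X -> R^o)].

Definition le_pw (R : realType) (X : Type) (f g : X -> R) : Prop :=
  forall x, f x <= g x.

Definition is_sup_C (R : realType) (X : topologicalType)
    (S : set (X -> R)) (f : X -> R) : Prop :=
  [/\ @Ccont R X f,
      (forall g, S g -> le_pw g f) &
      (forall h, @Ccont R X h -> (forall g, S g -> le_pw g h) -> le_pw f h)].

Definition countable_sup_property (R : realType) (X : topologicalType) : Prop :=
  forall (S : set (X -> R)) (f : X -> R),
    S `<=` @Ccont R X -> S !=set0 -> is_sup_C S f ->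
    exists T : set (X -> R), [/\ T `<=` S, countable T & is_sup_C T f].

From HB Require Import structures.
From mathcomp Require Import all_boot all_order all_algebra.
From mathcomp Require Import all_classical all_reals topology normedtype.
From mathcomp Require Import ring lra.
Set Implicit Arguments. Unset Strict Implicit. Unset Printing Implicit Defensive.
Import Order.TTheory GRing.Theory Num.Theory.
Local Open Scope classical_set_scope.
Local Open Scope ring_scope.
Import numFieldNormedType.Exports.

(* Separable => countable sup property: let T pick, for each point z of a
   countable dense set and rationals r, q, some g in S with g > q somewhere in
   the r-ball around z.  A continuous h above T is above S, since h < q < g on
   a ball around a point where h < g.  Conversely, the tents of radius r have
   supremum 1, hence countably many of them do; as 1 - tent r y is continuous
   and vanishes at y, every y lies within 2r of one of their centres, and these
   centres, over rational r, form a countable dense set. *)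

Lemma dist_max_le (R : realFieldType) (c u v : R) :
  `|Num.max c u - Num.max c v| <= `|u - v|.
Proof.
have := ler_norm (u - v); have := ler_norm (v - u); rewrite distrC.
by rewrite !maxEle; case: ifP; case: ifP; rewrite ler_norml; lra.
Qed.

Section MetricSpace.
Variables (R : realType) (X : topologicalType) (d : X -> X -> R).
Hypothesis d_ge0 : forall x y, 0 <= d x y.
Hypothesis d_eq0 : forall x y, d x y = 0 <-> x = y.
Hypothesis dC : forall x y, d x y = d y x.
Hypothesis d_triangle : forall x y z, d x z <= d x y + d y z.
Hypothesis openE : forall A : set X, open A <->
  (forall x, A x -> exists2 e : R, 0 < e & forall y, d x y < e -> A y).

Lemma dxx x : d x x = 0. Proof. exact/d_eq0. Qed.

Lemma dist_lipschitz x y z : `|d x y - d x z| <= d y z.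
Proof.
have := d_triangle x y z; have := d_triangle x z y; rewrite (dC z y).
by rewrite ler_norml; lra.
Qed.

Lemma nbhs_metric_ball x e : 0 < e -> nbhs x [set y | d x y < e].
Proof.
move=> e0; apply: open_nbhs_nbhs; split; last by rewrite /= dxx.
apply/openE => y /= xy; exists (e - d x y); first lra.
by move=> z yz; have := d_triangle x y z; lra.
Qed.

Lemma nbhs_metricP x (B : set X) :
  nbhs x B -> exists2 e, 0 < e & forall y, d x y < e -> B y.
Proof.
rewrite nbhsE => -[U [/openE oU Ux] UB].
by have [e e0 xU] := oU x Ux; exists e => // y /xU /UB.
Qed.

Lemma closure_metricP (D : set X) x :
  closure D x <-> forall e, 0 < e -> exists2 z, D z & d x z < e.
Proof.
split=> [Dx e e0 | near B /nbhs_metricP[e e0 xB]].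
  by have [z [Dz xz]] := Dx _ (nbhs_metric_ball x e0); exists z.
by have [z Dz xz] := near e e0; exists z; split => //; apply: xB.
Qed.

Lemma lipschitz_continuous (f : X -> R) (k : R) : 0 < k ->
  (forall x y, `|f x - f y| <= k * d x y) -> continuous (f : X -> R^o).
Proof.
move=> k0 fk x B /nbhs_ballP[e /= e0 eB].
apply: filterS (nbhs_metric_ball x (divr_gt0 e0 k0)) => y /= xy.
apply: eB; rewrite -ball_normE /=; apply: le_lt_trans (fk x y) _.
by rewrite mulrC -ltr_pdivlMr.
Qed.

Lemma countable_dominating_subset (D : set X) (S : set (X -> R)) :
  countable D -> closure D = setT ->
  exists T, [/\ T `<=` S, countable T &
    forall h, continuous (h : X -> R^o) -> (forall g, T g -> le_pw g h) ->
      forall g, S g -> le_pw g h].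
Proof.
move=> cD clD.
pose A (i : X * rat * rat) := [set g | S g /\
  exists2 y, d i.1.1 y < ratr i.1.2 & ratr i.2 < g y].
pose I := [set i | D i.1.1 /\ A i !=set0].
have AI i : I i -> A i (xget (fun=> 0) (A i)) by move=> [_ /xgetPex].
exists [set xget (fun=> 0) (A i) | i in I]; split.
- by move=> _ [i /AI[Sx _] <-].
- apply: sub_countable (card_image_le _ _) _.
  apply: sub_countable (subset_card_le (_ : I `<=` D `*` setT `*` setT)) _.
    by move=> i [].
  by apply: countableX => //; apply: countableX.
move=> h hC hT g Sg x; rewrite leNgt; apply/negP => hgx.
have [q] := rat_in_itvoo hgx; rewrite in_itv /= => /andP[hq qg].
have /openE/(_ x hq)[e e0 he] : open [set z | h z < ratr q].
  by have := proj1 (continuousP _) hC _ (@open_lt _ (ratr q)).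
have [r] := rat_in_itvoo (divr_gt0 e0 (ltr0n R 2)).
rewrite in_itv /= => /andP[r0 re].
have /closure_metricP/(_ _ r0)[z Dz xz] : closure D x by rewrite clD.
have Ii : I (z, r, q) by split=> //; exists g; split=> //; exists x; rewrite // dC.
have [_ [y zy qy]] := AI _ Ii.
have : h y < ratr q by apply: he; have := d_triangle x z y; lra.
by have := hT _ (ex_intro2 _ _ _ Ii erefl) y; lra.
Qed.

Lemma countable_sup_property_of_separable :
  separable_space X -> countable_sup_property R X.
Proof.
move=> [D [cD clD]] S f _ _ [fC Sf f_least].
have [T [TS cT T_dominates]] := countable_dominating_subset S cD clD.
exists T; split => //; split => // [g /TS/Sf // | h hC hT].
by apply: f_least => //; exact: T_dominates.
Qed.

Definition tent (r : R) (x : X) : X -> R := fun z => Num.max 0 (1 - d x z / r).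

Lemma tent_continuous (r : R) x : 0 < r -> continuous (tent r x : X -> R^o).
Proof.
move=> r0; have rV0 : 0 < r^-1 by rewrite invr_gt0.
apply: (lipschitz_continuous rV0) => y z; apply: le_trans (dist_max_le _ _ _) _.
have -> : 1 - d x y / r - (1 - d x z / r) = (d x z - d x y) / r by ring.
by rewrite normrM (gtr0_norm rV0) mulrC ler_pM2l // distrC dist_lipschitz.
Qed.

Lemma tent_le1 (r : R) x z : 0 < r -> tent r x z <= 1.
Proof.
by move=> r0; rewrite ge_max ler01 lerBlDr lerDl divr_ge0 // ltW.
Qed.

Lemma tent_center (r : R) x : tent r x x = 1.
Proof. by rewrite /tent dxx mul0r subr0 max_r ?ler01. Qed.

Lemma tent_inj (r : R) : 0 < r -> injective (tent r).
Proof.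
move=> r0 x x' /(congr1 (fun g => g x')); rewrite tent_center /tent maxEle.
have [_ txx' | _ ?] := ifP; last by exfalso; lra.
have /eqP : d x x' / r = 0 by lra.
by rewrite mulf_eq0 invr_eq0 (gt_eqF r0) orbF => /eqP/d_eq0.
Qed.

Lemma is_sup_C_tents (r : R) : 0 < r -> is_sup_C (range (tent r)) (fun=> 1).
Proof.
move=> r0; split; first exact: cst_continuous.
  by move=> _ [x _ <-] z; exact: tent_le1.
by move=> h _ hT x; rewrite -(tent_center r x); apply: hT; exists x.
Qed.

(* Tents whose centres are 2r apart have disjoint supports. *)
Lemma tentD_le1 (r : R) x y z : 0 < r -> 2 * r <= d x y ->
  tent r x z + tent r y z <= 1.
Proof.
move=> r0 xy; have : 2 <= d x z / r + d y z / r.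
  rewrite -mulrDl ler_pdivlMr // (dC y z).
  exact: le_trans xy (d_triangle x z y).
have := tent_le1 x z r0; have := tent_le1 y z r0.
by rewrite /tent !maxEle; case: ifP; case: ifP; lra.
Qed.

Lemma tents_cover (r : R) (T : set (X -> R)) : 0 < r ->
  T `<=` range (tent r) -> is_sup_C T (fun=> 1) ->
  forall y, exists2 x, T (tent r x) & d x y < 2 * r.
Proof.
move=> r0 Ttent [_ _ T_least] y; apply: contrapT => far.
pose h z := 1 - tent r y z.
have hC : continuous (h : X -> R^o).
  by move=> z; apply: cvgB; [exact: cvg_cst | exact: tent_continuous].
have Th g : T g -> le_pw g h.
  move=> Tg z; have [x _ xg] := Ttent g Tg; rewrite -xg /h lerBrDr.
  apply: tentD_le1; rewrite // leNgt; apply/negP => xy.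
  by apply: far; exists x => //; rewrite xg.
by have := T_least h hC Th y; rewrite /h tent_center subrr ler10.
Qed.

Lemma countable_net_of_countable_sup_property (e : R) :
  countable_sup_property R X -> 0 < e ->
  exists C, countable C /\ forall y, exists2 x, C x & d x y < e.
Proof.
move=> csp e0; have r0 : 0 < e / 2 by rewrite divr_gt0.
have [[x0 _] | noX] := pselect (exists x : X, True); last first.
  by exists set0; split => // y; exfalso; apply: noX; exists y.
have [T [Ttent cT Tsup]] : exists T, [/\ T `<=` range (tent (e / 2)),
    countable T & is_sup_C T (fun=> 1)].
  apply: (csp _ _ _ _ (is_sup_C_tents r0)); last by exists (tent (e / 2) x0), x0.
  by move=> _ [x _ <-]; exact: tent_continuous.
exists (tent (e / 2) @^-1` T); split.
  exact: sub_countable (card_ge_preimage (in2W (tent_inj r0))) cT.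
move=> y; have [x Tx xy] := tents_cover r0 Ttent Tsup y.
by exists x => //; lra.
Qed.

Lemma separable_of_countable_nets :
  (forall e, 0 < e -> exists C, countable C /\ forall y, exists2 x, C x & d x y < e) ->
  separable_space X.
Proof.
move=> nets.
have rat_nets (q : rat) : exists C : set X, countable C /\
    (0 < (ratr q : R) -> forall y, exists2 x, C x & d x y < ratr q).
  have [q0 | q0] := ltrP 0 (ratr q : R).
    by have [C [cC HC]] := nets _ q0; exists C.
  by exists set0; split => //; rewrite ltNge q0.
have [N HN] := choice rat_nets.
exists (\bigcup_q N q); split.
  by apply: bigcup_countable => // q _; case: (HN q).
apply/seteqP; split => // y _; apply/closure_metricP => e e0.
have [q] := rat_in_itvoo e0; rewrite in_itv /= => /andP[q0 qe].
have [x Nx xy] := (HN q).2 q0 y.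
by exists x; [exists q | rewrite dC; lra].
Qed.

Lemma separable_of_countable_sup_property :
  countable_sup_property R X -> separable_space X.
Proof.
move=> csp; apply: separable_of_countable_nets => e.
exact: countable_net_of_countable_sup_property.
Qed.

End MetricSpace.

Theorem corollary4p9 (R : realType) (X : topologicalType) :
  metrizable R X -> (separable_space X <-> countable_sup_property R X).
Proof.
move=> [d [d_ge0 d_eq0 dC d_triangle openE]]; split.
- exact: countable_sup_property_of_separable d_eq0 dC d_triangle openE.
- exact: separable_of_countable_sup_property d_ge0 d_eq0 dC d_triangle openE.
Qed.
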